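(* Let $\alpha\ge0$ and $n\ge2$ with $n\ge\alpha$, and let $K$ be the event that $\mathscr{G}(n,\alpha/n)$ is connected. Then \[ P_{n,\alpha}(K)\ge\frac1n\Bigl(1-\bigl(1-\tfrac{\alpha}{n}\bigr)^{n-1}\Bigr)^{n-1}. \]
   Context: $\mathscr{G}(n,p)$ is the random graph on vertex set $\{1,\dots,n\}$ in which each of the $\binom n2$ unordered pairs is an edge independently with probability $p$; here $p=\alpha/n$, and $P_{n,\alpha}$ is the corresponding probability measure. *)

From mathcomp Require Import all_boot all_order all_algebra.
Set Implicit Arguments. Unset Strict Implicit. Unset Printing Implicit Defensive.
Import Order.TTheory GRing.Theory Num.Theory.
Local Open Scope ring_scope.

(* Unordered pairs {i,j} of vertices of [n] = 'I_n, encoded as (i,j) with i < j. *)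
Definition upairs (n : nat) : {set 'I_n * 'I_n} :=
  [set e : 'I_n * 'I_n | (e.1 < e.2)%N].

(* A simple graph on 'I_n is a subset E of upairs n; adjacency relation. *)
Definition gadj (n : nat) (E : {set 'I_n * 'I_n}) : rel 'I_n :=
  fun x y => ((x, y) \in E) || ((y, x) \in E).

Definition gconnected (n : nat) (E : {set 'I_n * 'I_n}) : bool :=
  [forall x : 'I_n, forall y : 'I_n, connect (gadj E) x y].

Definition gnp_weight (R : comRingType) (n : nat) (p : R) (E : {set 'I_n * 'I_n}) : R :=
  p ^+ #|E| * (1 - p) ^+ (#|upairs n| - #|E|).

Definition gnp_prob (R : comRingType) (n : nat) (p : R) (A : pred {set 'I_n * 'I_n}) : R :=
  \sum_(E in powerset (upairs n) | A E) gnp_weight p E.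

From mathcomp Require Import all_boot all_order all_algebra.
From mathcomp Require Import ring lra zify.
Set Implicit Arguments. Unset Strict Implicit. Unset Printing Implicit Defensive.
Import Order.TTheory GRing.Theory Num.Theory.
Local Open Scope ring_scope.

(* Grow the component of a fixed vertex in rounds. Given a set I of k reached vertices and a
   disjoint set S of m vertices still to reach, each s in S has an edge to I with probability
   1 - (1-p)^k, independently of the others, so the newly reached set J is a random subset of S
   with that parameter, while the edges inside S are not yet examined. By induction on m, every
   vertex of S is joined to I by a path with probability at least
   b(k, m) = k/(k+m) (1 - (1-p)^(k+m-1))^m: averaging b(|J|, m - |J|) over J gives exactly
   (1 - (1-p)^k) (1 - (1-p)^(k+m-1))^(m-1), which dominates b(k, m) because (1 - x^j)/j is
   nonincreasing in j. The theorem is the case k = 1, m = n - 1. *)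

Lemma finset_ind (T : finType) (P : {set T} -> Prop) :
  P set0 -> (forall (t : T) (U : {set T}), t \notin U -> P U -> P (t |: U)) -> forall U, P U.
Proof.
move=> P0 PU1 U; have [m] := ubnP #|U|; elim: m U => // m IH U.
case: (set_0Vmem U) => [-> //|[t tU]]; rewrite (cardsD1 t U) tU => ltUm.
by rewrite -(setD1K tU); apply: PU1; [rewrite !inE eqxx | apply: IH].
Qed.

Lemma big_powersetU (R : Type) (idx : R) (op : Monoid.com_law idx)
    (T : finType) (U1 U2 : {set T}) (F : {set T} -> R) :
  [disjoint U1 & U2] ->
  \big[op/idx]_(E in powerset (U1 :|: U2)) F E =
  \big[op/idx]_(E1 in powerset U1) \big[op/idx]_(E2 in powerset U2) F (E1 :|: E2).
Proof.
move=> dU.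
rewrite (partition_big (fun E => E :&: U1) (fun E1 => E1 \in powerset U1)); last first.
  by move=> E _; rewrite powersetE subsetIr.
apply: eq_bigr => E1; rewrite powersetE => sE1.
rewrite (reindex_onto (fun E2 => E1 :|: E2) (fun E => E :&: U2)) /=; last first.
  by move=> E /andP[]; rewrite powersetE => sE /eqP <-; rewrite -setIUr; apply/setIidPl.
apply: eq_bigl => E2; rewrite !powersetE.
apply/andP/idP => [[_ /eqP <-] | sE2]; first exact: subsetIr.
have d21 : [disjoint E2 & U1] by rewrite disjoint_sym (disjointWr sE2).
have d12 : [disjoint E1 & U2] by rewrite (disjointWl sE1).
rewrite setUSS //= !setIUl (setIidPl sE1) (setIidPl sE2).
by rewrite (disjoint_setI0 d21) (disjoint_setI0 d12) setU0 set0U !eqxx.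
Qed.

Section RandomSubset.
Variables (R : comPzRingType) (T : finType) (p : R).
Implicit Types (U E : {set T}) (F G : {set T} -> R).

Definition subset_weight U E : R := p ^+ #|E| * (1 - p) ^+ (#|U| - #|E|).

(* The expectation of F(E) for a random subset E of U containing each element independently
   with probability p. *)
Definition Esub U F : R := \sum_(E in powerset U) subset_weight U E * F E.

Lemma eq_Esub U F G : {in powerset U, F =1 G} -> Esub U F = Esub U G.
Proof. by move=> eqFG; apply: eq_bigr => E /eqFG ->. Qed.

Lemma EsubD U F G : Esub U (F \+ G) = Esub U F + Esub U G.
Proof. by rewrite -big_split; apply: eq_bigr => E _; rewrite mulrDr. Qed.

Lemma EsubZ U c F : Esub U (fun E => c * F E) = c * Esub U F.
Proof. by rewrite mulr_sumr; apply: eq_bigr => E _; rewrite mulrCA. Qed.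

Lemma Esub0 F : Esub set0 F = F set0.
Proof.
by rewrite /Esub powerset0 big_set1 /subset_weight cards0 subnn !expr0 !mul1r.
Qed.

Lemma Esub1 t F : Esub [set t] F = p * F [set t] + (1 - p) * F set0.
Proof.
rewrite /Esub powerset1 big_setU1 ?big_set1 /=; last first.
  by rewrite inE eq_sym -cards_eq0 cards1.
by rewrite /subset_weight cards1 cards0 subnn subn0 addrC !expr1 !expr0 mulr1 mul1r.
Qed.

Lemma EsubU U1 U2 F : [disjoint U1 & U2] ->
  Esub (U1 :|: U2) F = Esub U1 (fun E1 => Esub U2 (fun E2 => F (E1 :|: E2))).
Proof.
move=> dU; rewrite /Esub big_powersetU //; apply: eq_bigr => E1; rewrite powersetE => sE1.
rewrite mulr_sumr; apply: eq_bigr => E2; rewrite powersetE => sE2; rewrite mulrA.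
congr (_ * _); have dE : [disjoint E1 & E2] by rewrite (disjointWl sE1) ?(disjointWr sE2).
rewrite /subset_weight !cardsU !(disjoint_setI0 _) ?cards0 ?subn0 //.
have le1 := subset_leq_card sE1; have le2 := subset_leq_card sE2.
have -> : (#|U1| + #|U2| - (#|E1| + #|E2|) = (#|U1| - #|E1|) + (#|U2| - #|E2|))%N by lia.
by rewrite !exprD; ring.
Qed.

Lemma EsubU1 t U F : t \notin U ->
  Esub (t |: U) F = p * Esub U (fun E => F (t |: E)) + (1 - p) * Esub U F.
Proof.
move=> tU; rewrite EsubU ?disjoints1 // Esub1; congr (_ + _ * _).
by apply: eq_Esub => E _; rewrite set0U.
Qed.

Lemma Esub_cst U c : Esub U (fun=> c) = c.
Proof.
elim/finset_ind: U => [|t U tU IH]; first by rewrite Esub0.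
by rewrite EsubU1 // IH; ring.
Qed.

Lemma Esub_eq0 U y z :
  Esub U (fun E => if E == set0 then y else z) =
  (1 - p) ^+ #|U| * y + (1 - (1 - p) ^+ #|U|) * z.
Proof.
elim/finset_ind: U => [|t U tU IH]; first by rewrite Esub0 eqxx cards0 expr0; ring.
rewrite EsubU1 // IH cardsU1 tU add1n exprS (eq_Esub (G := fun=> z)) ?Esub_cst; first by ring.
by move=> E _; rewrite setU_eq0 -cards_eq0 cards1.
Qed.

Lemma cardsU1_notin t U : t \notin U -> #|t |: U| = #|U|.+1.
Proof. by move=> tU; rewrite cardsU1 tU. Qed.

Lemma notin_powerset t U E : t \notin U -> E \in powerset U -> t \notin E.
Proof. by rewrite powersetE => tU /subsetP sEU; apply: contra (sEU t) tU. Qed.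

Lemma Esub_expr U c :
  Esub U (fun E => c ^+ (#|U| - #|E|)) = (p + (1 - p) * c) ^+ #|U|.
Proof.
elim/finset_ind: U => [|t U tU IH]; first by rewrite Esub0 cards0 !expr0.
have e1 : Esub U (fun E => c ^+ (#|t |: U| - #|t |: E|)) = Esub U (fun E => c ^+ (#|U| - #|E|)).
  apply: eq_Esub => E sEU.
  by rewrite !cardsU1_notin ?(notin_powerset tU sEU).
have e2 : Esub U (fun E => c ^+ (#|t |: U| - #|E|)) = c * Esub U (fun E => c ^+ (#|U| - #|E|)).
  rewrite -EsubZ; apply: eq_Esub => E sEU; rewrite powersetE in sEU.
  by rewrite cardsU1_notin // subSn ?subset_leq_card // exprS.
by rewrite EsubU1 // e1 e2 IH cardsU1_notin // exprS; ring.
Qed.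

Lemma Esub_card_expr U c :
  Esub U (fun E => #|E|%:R * c ^+ (#|U| - #|E|)) =
  #|U|%:R * p * (p + (1 - p) * c) ^+ #|U|.-1.
Proof.
elim/finset_ind: U => [|t U tU IH]; first by rewrite Esub0 cards0 !mul0r.
have e1 : Esub U (fun E => #|t |: E|%:R * c ^+ (#|t |: U| - #|t |: E|)) =
    Esub U (fun E => #|E|%:R * c ^+ (#|U| - #|E|)) + Esub U (fun E => c ^+ (#|U| - #|E|)).
  rewrite -EsubD; apply: eq_Esub => E sEU /=.
  by rewrite !cardsU1_notin ?(notin_powerset tU sEU) // subSS -addn1 natrD mulrDl mul1r.
have e2 : Esub U (fun E => #|E|%:R * c ^+ (#|t |: U| - #|E|)) =
    c * Esub U (fun E => #|E|%:R * c ^+ (#|U| - #|E|)).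
  rewrite -EsubZ; apply: eq_Esub => E sEU; rewrite powersetE in sEU.
  by rewrite cardsU1_notin // subSn ?subset_leq_card // exprS mulrCA.
rewrite EsubU1 // e1 e2 IH Esub_expr cardsU1_notin //=.
by case: #|U| => [|m] /=; rewrite ?mul0r ?add0r ?expr0 ?mulr1 ?exprS -?natr1; ring.
Qed.

Lemma Esub_subset U (P : {set T}) F : P \subset U ->
  Esub U F = Esub P (fun E1 => Esub (U :\: P) (fun E2 => F (E1 :|: E2))).
Proof.
move=> sPU; rewrite -{1}(setID U P) (setIidPr sPU) EsubU //.
by rewrite disjoint_sym disjoints_subset subsetDr.
Qed.
End RandomSubset.

Lemma ler_Esub (R : numDomainType) (T : finType) (p : R) (U : {set T}) (F G : {set T} -> R) :
  0 <= p <= 1 -> {in powerset U, forall E, F E <= G E} -> Esub p U F <= Esub p U G.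
Proof.
move=> /andP[p0 p1] leFG; apply: ler_sum => E /leFG; apply: ler_wpM2l.
by rewrite mulr_ge0 ?exprn_ge0 ?subr_ge0.
Qed.

Lemma Esub_ge0 (R : numDomainType) (T : finType) (p : R) (U : {set T}) (F : {set T} -> R) :
  0 <= p <= 1 -> {in powerset U, forall E, 0 <= F E} -> 0 <= Esub p U F.
Proof. by move=> p01 F_ge0; rewrite -(Esub_cst p U 0) ler_Esub. Qed.

Lemma ler_natb (R : numDomainType) (b1 b2 : bool) : (b1 -> b2) -> b1%:R <= b2%:R :> R.
Proof. by case: b1 => [/(_ isT) -> | _]; rewrite ?ler0n. Qed.

Section GeometricSums.
Variables (R : realDomainType) (x : R).
Hypotheses (x0 : 0 <= x) (x1 : x <= 1).

Lemma natr_mulX_le_one_subX j N : (j <= N)%N -> j%:R * x ^+ N * (1 - x) <= 1 - x ^+ j.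
Proof.
move=> leJN.
have -> : 1 - x ^+ j = (1 - x) * \sum_(i < j) x ^+ i.
  by rewrite -[LHS]opprB subrX1 -mulNr opprB.
rewrite mulrC ler_wpM2l ?subr_ge0 // mulr_natl -[in X in _ *+ X](card_ord j) -sumr_const.
apply: ler_sum => i _; apply: ler_wiXn2l => //.
by rewrite (leq_trans (ltnW (ltn_ord i))).
Qed.

Lemma natr_one_subX_mono j k : (j <= k)%N -> j%:R * (1 - x ^+ k) <= k%:R * (1 - x ^+ j).
Proof.
move=> /subnKC <-; elim: (k - j)%N => [|d IH]; first by rewrite addn0.
have := natr_mulX_le_one_subX (leq_addr d j).
have : 0 <= x ^+ (j + d) * (1 - x) by rewrite mulr_ge0 ?exprn_ge0 ?subr_ge0.
rewrite addnS exprS -addn1 natrD; nra.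
Qed.
End GeometricSums.

Section CrossEdges.
Variable n : nat.
Implicit Types (I J S X Y Z W : {set 'I_n}) (E U : {set 'I_n * 'I_n}).

Definition cross_edges X Y : {set 'I_n * 'I_n} :=
  [set e in upairs n | (e.1 \in X) && (e.2 \in Y) || (e.1 \in Y) && (e.2 \in X)].

Definition nbhd E I : {set 'I_n} := [set x | [exists i in I, gadj E x i]].

Definition linked I S E : bool := [forall s in S, [exists i in I, connect (gadj E) s i]].

Lemma cross_edges_sub_upairs X Y : cross_edges X Y \subset upairs n.
Proof. by apply/subsetP => e; rewrite inE => /andP[]. Qed.

Lemma cross_edgesC X Y : cross_edges X Y = cross_edges Y X.
Proof. by apply/setP => e; rewrite !inE orbC. Qed.

Lemma cross_edgesS X Y Z W : X \subset Z -> Y \subset W -> cross_edges X Y \subset cross_edges Z W.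
Proof.
move=> /subsetP sXZ /subsetP sYW; apply/subsetP => e; rewrite !inE => /andP[-> /=].
by case/orP => /andP[h1 h2]; [rewrite (sXZ _ h1) (sYW _ h2) | rewrite (sYW _ h1) (sXZ _ h2) orbT].
Qed.

Lemma cross_edges0 X : cross_edges X set0 = set0.
Proof. by apply/setP => e; rewrite !inE !andbF. Qed.

Lemma cross_edgesU X Y Z : cross_edges X (Y :|: Z) = cross_edges X Y :|: cross_edges X Z.
Proof.
apply/setP => e; rewrite !inE; case: (_ < _)%N => //=.
by case: (e.1 \in X); case: (e.2 \in X); case: (e.1 \in Y); case: (e.2 \in Y);
  case: (e.1 \in Z); case: (e.2 \in Z).
Qed.

Lemma cross_edges_disjoint X Y Z W : [disjoint X & Z] -> [disjoint Y & Z] ->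
  [disjoint cross_edges X Y & cross_edges Z W].
Proof.
move=> dXZ dYZ; rewrite disjoints_subset; apply/subsetP => e.
rewrite !inE => /andP[_ eXY]; apply/negP => /andP[_ eZW].
have notZ u : (u \in X) || (u \in Y) -> u \in Z = false.
  by case/orP => [/(disjointFr dXZ) | /(disjointFr dYZ)].
have [/notZ e1 /notZ e2] : ((e.1 \in X) || (e.1 \in Y)) /\ ((e.2 \in X) || (e.2 \in Y)).
  by case/orP: eXY => /andP[-> ->]; rewrite ?orbT.
by case/orP: eZW => /andP[]; rewrite ?e1 ?e2.
Qed.

Lemma card_cross_edges1 I t : t \notin I -> #|cross_edges I [set t]| = #|I|.
Proof.
move=> tI; pose f (i : 'I_n) : 'I_n * 'I_n := if (i < t)%N then (i, t) else (t, i).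
have neq_t i : i \in I -> i != t by apply: contraTneq => ->.
have -> : cross_edges I [set t] = f @: I.
  apply/setP => -[u v]; rewrite !inE /=; apply/andP/imsetP => [[uv]|[i iI]].
    case/orP => /andP[]; [move=> uI /eqP vt | move=> /eqP ut vI]; subst.
      by exists u; rewrite // /f uv.
    by exists v; rewrite // /f ltnNge ltnW.
  rewrite /f; have := neq_t i iI; rewrite neq_ltn.
  by case/orP => it; rewrite ?it ?(leq_gtF (ltnW it)) /= => -[-> ->]; rewrite ?it ?eqxx ?iI ?orbT.
apply: card_in_imset => i j iI jI; rewrite /f.
have := neq_t i iI; have := neq_t j jI; rewrite !neq_ltn.
by case/orP => jt; case/orP => it;
  rewrite ?it ?jt ?(leq_gtF (ltnW it)) ?(leq_gtF (ltnW jt)) /= => -[]; do ?move=> ->.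
Qed.

Lemma gadjU E1 E2 u v : gadj (E1 :|: E2) u v = gadj E1 u v || gadj E2 u v.
Proof. by rewrite /gadj !inE orbACA. Qed.

Lemma gadjC E u v : gadj E u v = gadj E v u.
Proof. by rewrite /gadj orbC. Qed.

Lemma nbhdU E1 E2 I : nbhd (E1 :|: E2) I = nbhd E1 I :|: nbhd E2 I.
Proof.
apply/setP => u; rewrite !inE; apply/exists_inP/orP => [[i iI]|].
  by rewrite gadjU => /orP[h|h]; [left|right]; apply/exists_inP; exists i.
by case=> /exists_inP[i iI h]; exists i; rewrite // gadjU h ?orbT.
Qed.

Lemma gadj_cross_edges E X Y u v : E \subset cross_edges X Y -> gadj E u v ->
  (u \in X) && (v \in Y) || (u \in Y) && (v \in X).
Proof.
move=> /subsetP sE; rewrite /gadj => /orP[] /sE; rewrite inE => /andP[_] //.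
by rewrite orbC andbC [in X in _ || X]andbC.
Qed.

Lemma nbhd_cross_edges E X Y : [disjoint X & Y] -> E \subset cross_edges X Y ->
  nbhd E X \subset Y.
Proof.
move=> dXY sE; apply/subsetP => u; rewrite inE => /exists_inP[x xX /(gadj_cross_edges sE)].
by rewrite xX (disjointFr dXY xX) andbF andbT.
Qed.

Lemma nbhd0 I : nbhd set0 I = set0.
Proof. by apply/setP => u; rewrite !inE; apply/exists_inP => -[i _]; rewrite /gadj !inE. Qed.

Lemma nbhd_cross_edges1 E I t : t \notin I -> E \subset cross_edges I [set t] ->
  nbhd E I = if E == set0 then set0 else [set t].
Proof.
move=> tI sE; have [-> | [e eE]] := set_0Vmem E.
  by rewrite eqxx nbhd0.
have /negPf -> : E != set0 by apply/set0Pn; exists e.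
have dIt : [disjoint I & [set t]] by rewrite disjoint_sym disjoints1.
apply/eqP; rewrite eqEsubset (nbhd_cross_edges dIt sE) sub1set inE.
have : gadj E e.1 e.2 by rewrite /gadj; case: e eE => u v ->.
move=> /[dup] /(gadj_cross_edges sE); rewrite !inE.
by case/orP => [/andP[e1I /eqP ->] | /andP[/eqP -> e2I]] he; apply/exists_inP;
  [exists e.1; rewrite // gadjC | exists e.2].
Qed.


Lemma Esub_nbhd (R : comPzRingType) (p : R) I S (F : {set 'I_n} -> R) : [disjoint I & S] ->
  Esub p (cross_edges I S) (fun E => F (nbhd E I)) = Esub (1 - (1 - p) ^+ #|I|) S F.
Proof.
elim/finset_ind: S F => [|t S tS IH] F dIS; first by rewrite cross_edges0 !Esub0 nbhd0.
have tI : t \notin I by rewrite (disjointFl dIS) // setU11.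
have dIS' : [disjoint I & S] by rewrite (disjointWr _ dIS) // subsetUr.
have dItS : [disjoint cross_edges I [set t] & cross_edges I S].
  by rewrite [cross_edges I S]cross_edgesC cross_edges_disjoint // disjoints1.
rewrite cross_edgesU EsubU // EsubU1 //.
transitivity (Esub p (cross_edges I [set t])
    (fun E1 => if E1 == set0 then Esub (1 - (1 - p) ^+ #|I|) S F
               else Esub (1 - (1 - p) ^+ #|I|) S (fun J => F (t |: J)))).
  apply: eq_Esub => E1; rewrite powersetE => sE1.
  rewrite (eq_Esub p (G := fun E2 => F (if E1 == set0 then nbhd E2 I else t |: nbhd E2 I))).
    by case: ifP => _; [exact: IH | exact: (IH (fun J => F (t |: J)))].
  by move=> E2 _; rewrite nbhdU (nbhd_cross_edges1 tI sE1); case: ifP; rewrite ?set0U.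
rewrite Esub_eq0 card_cross_edges1 //; ring.
Qed.

Lemma cross_edges_remaining I S J U : [disjoint I & S] -> J \subset S ->
  cross_edges S (I :|: S) \subset U ->
  cross_edges (S :\: J) (J :|: S :\: J) \subset U :\: cross_edges I S.
Proof.
move=> dIS sJS sU; have -> : J :|: S :\: J = S by rewrite -{2}(setID S J) (setIidPr sJS).
have dSI : [disjoint S & I] by rewrite disjoint_sym.
rewrite subsetD cross_edges_disjoint ?(disjointWl (subsetDl S J)) // andbT.
by apply: subset_trans sU; rewrite cross_edgesS ?subsetDl ?subsetUr.
Qed.

Lemma linked_nbhd I S E1 E2 :
  linked (nbhd E1 I) (S :\: nbhd E1 I) E2 -> linked I S (E1 :|: E2).
Proof.
move=> linkedJ; apply/forall_inP => s sS; have [sJ | sNJ] := boolP (s \in nbhd E1 I).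
  move: sJ; rewrite inE => /exists_inP[i iI adj_si]; apply/exists_inP; exists i => //.
  by apply: connect1; rewrite gadjU adj_si.
have sSJ : s \in S :\: nbhd E1 I by rewrite inE sNJ.
have /exists_inP[j] := forall_inP linkedJ s sSJ.
rewrite inE => /exists_inP[i iI adj_ji] conn_sj; apply/exists_inP; exists i => //.
apply: (connect_trans _ (connect1 (_ : gadj _ j i))); last by rewrite gadjU adj_ji.
by apply: connect_sub conn_sj => u v adj_uv; apply: connect1; rewrite gadjU adj_uv orbT.
Qed.

Lemma gconnected_linked1 E v : linked [set v] (~: [set v]) E -> gconnected E.
Proof.
move=> linked_v; have to_v u : connect (gadj E) u v.
  have [-> | uNv] := eqVneq u v; first exact: connect0.
  have u_out : u \in ~: [set v] by rewrite !inE.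
  have /exists_inP[w] := forall_inP linked_v u u_out.
  by rewrite inE => /eqP ->.
have sym : connect_sym (gadj E) by apply: sym_connect_sym => x y; rewrite gadjC.
by apply/forallP => x; apply/forallP => y; rewrite (connect_trans (to_v x)) // sym.
Qed.
End CrossEdges.


Section ConnectivityBound.
Variables (R : realFieldType) (p : R).
Hypotheses (p0 : 0 <= p) (p1 : p <= 1).

Definition conn_bound (k m : nat) : R :=
  k%:R / (k + m)%:R * (1 - (1 - p) ^+ (k + m).-1) ^+ m.

Lemma Esub_conn_bound a (T : finType) (S : {set T}) : (0 < #|S|)%N ->
  Esub a S (fun J => conn_bound #|J| (#|S| - #|J|)) =
  a * (a + (1 - a) * (1 - (1 - p) ^+ #|S|.-1)) ^+ #|S|.-1.
Proof.
move=> S_gt0; set c := 1 - (1 - p) ^+ #|S|.-1.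
rewrite (eq_Esub a (G := fun J => #|S|%:R^-1 * (#|J|%:R * c ^+ (#|S| - #|J|)))).
  by rewrite EsubZ Esub_card_expr mulrA mulrA mulVf ?mul1r // pnatr_eq0 -lt0n.
move=> J; rewrite powersetE => /subset_leq_card leJS.
by rewrite /conn_bound subnKC // mulrCA mulrA.
Qed.

Lemma conn_bound_le k m : (0 < k)%N -> (0 < m)%N ->
  conn_bound k m <= (1 - (1 - p) ^+ k) * (1 - (1 - p) ^+ (k + m).-1) ^+ m.-1.
Proof.
move=> k_gt0 m_gt0; set x := 1 - p; set d := 1 - x ^+ (k + m).-1.
have x0 : 0 <= x by rewrite subr_ge0.
have x1 : x <= 1 by rewrite lerBlDr lerDl.
rewrite /conn_bound -/x -/d -[in d ^+ m](prednK m_gt0) exprS mulrA.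
apply: ler_wpM2r; first by rewrite exprn_ge0 // subr_ge0 exprn_ile1.
rewrite mulrAC ler_pdivrMr ?ltr0n ?addn_gt0 ?k_gt0 // [_ * (k + m)%:R]mulrC.
have le_k : (k <= (k + m).-1)%N by lia.
apply: le_trans (natr_one_subX_mono x0 x1 le_k) _.
by rewrite ler_wpM2r ?subr_ge0 ?exprn_ile1 // ler_nat; lia.
Qed.

Lemma conn_bound_le_Esub k (T : finType) (S : {set T}) : (0 < k)%N -> (0 < #|S|)%N ->
  conn_bound k #|S| <= Esub (1 - (1 - p) ^+ k) S (fun J => conn_bound #|J| (#|S| - #|J|)).
Proof.
move=> k_gt0 S_gt0; rewrite Esub_conn_bound //.
have -> : 1 - (1 - p) ^+ k + (1 - (1 - (1 - p) ^+ k)) * (1 - (1 - p) ^+ #|S|.-1) =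
    1 - (1 - p) ^+ (k + #|S|).-1.
  by rewrite -[in RHS](prednK S_gt0) addnS exprD; ring.
exact: conn_bound_le.
Qed.

Lemma conn_bound0n m : conn_bound 0 m = 0.
Proof. by rewrite /conn_bound !mul0r. Qed.

Lemma conn_bound_le_Esub_linked n (I S : {set 'I_n}) (U : {set 'I_n * 'I_n}) :
  [disjoint I & S] -> cross_edges S (I :|: S) \subset U ->
  conn_bound #|I| #|S| <= Esub p U (fun E => (linked I S E)%:R).
Proof.
have p01 : 0 <= p <= 1 by rewrite p0 p1.
have [m] := ubnP #|S|; elim: m I S U => // m IH I S U ltSm dIS sU.
have [-> | k_gt0] := posnP #|I|.
  by rewrite conn_bound0n Esub_ge0 // => E _; rewrite ler0n.
have [S0 | m_gt0] := posnP #|S|.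
  have -> : S = set0 by apply/eqP; rewrite -cards_eq0 S0.
  rewrite (eq_Esub p (G := fun=> 1)) ?Esub_cst.
    by rewrite /conn_bound cards0 addn0 expr0 mulr1 divff // pnatr_eq0 -lt0n.
  by move=> E _; have -> : linked I set0 E by apply/forall_inP => s; rewrite inE.
have sPU : cross_edges I S \subset U.
  by apply: subset_trans sU; rewrite [cross_edges I S]cross_edgesC cross_edgesS ?subsetUl.
rewrite (Esub_subset p _ sPU); apply: le_trans (conn_bound_le_Esub k_gt0 m_gt0) _.
rewrite -Esub_nbhd //; apply: ler_Esub => // E1; rewrite powersetE => sE1.
have sJS : nbhd E1 I \subset S := nbhd_cross_edges dIS sE1.
apply: (@le_trans _ _ (Esub p (U :\: cross_edges I S)
  (fun E2 => (linked (nbhd E1 I) (S :\: nbhd E1 I) E2)%:R))).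
  have [-> | J_gt0] := posnP #|nbhd E1 I|.
    by rewrite conn_bound0n Esub_ge0 // => E _; rewrite ler0n.
  have cSJ : #|S :\: nbhd E1 I| = (#|S| - #|nbhd E1 I|)%N by rewrite cardsD (setIidPr sJS).
  rewrite -cSJ; apply: IH; last exact: cross_edges_remaining.
    by rewrite cSJ; have := subset_leq_card sJS; lia.
  by rewrite disjoint_sym disjoints_subset subsetDr.
by apply: ler_Esub => // E2 _; apply/ler_natb/linked_nbhd.
Qed.
End ConnectivityBound.

Lemma gnp_prob_Esub (R : comNzRingType) n (p : R) (A : pred {set 'I_n * 'I_n}) :
  gnp_prob p A = Esub p (upairs n) (fun E => (A E)%:R).
Proof.
rewrite /gnp_prob /Esub big_mkcondr; apply: eq_bigr => E _.
by rewrite /gnp_weight /subset_weight; case: (A E); rewrite ?mulr1 ?mulr0.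
Qed.

Theorem lemma3p4 (R : realFieldType) (alpha : R) (n : nat) :
  0 <= alpha -> (2 <= n)%N -> alpha <= n%:R ->
  n%:R^-1 * (1 - (1 - alpha / n%:R) ^+ n.-1) ^+ n.-1
    <= gnp_prob (alpha / n%:R) (@gconnected n).
Proof.
move=> alpha_ge0 n_ge2 alpha_le_n; set p := alpha / n%:R.
have n_gt0 : (0 < n)%N by lia.
have p0 : 0 <= p by rewrite divr_ge0 ?ler0n.
have p1 : p <= 1 by rewrite ler_pdivrMr ?ltr0n // mul1r.
pose v := Ordinal n_gt0.
have -> : n%:R^-1 * (1 - (1 - p) ^+ n.-1) ^+ n.-1 = conn_bound p #|[set v]| #|~: [set v]|.
  by rewrite /conn_bound cards1 cardsC1 card_ord add1n prednK // mul1r.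
rewrite gnp_prob_Esub; apply: le_trans (conn_bound_le_Esub_linked p0 p1 _ _) _.
- by rewrite disjoints1 !inE eqxx.
- exact: cross_edges_sub_upairs.
apply: ler_Esub => [|E _]; first by rewrite p0 p1.
exact/ler_natb/gconnected_linked1.
Qed.
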